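(* Assume the standing assumptions below and, in addition, that LICQ holds for every subproblem, i.e. $\operatorname{rank}S_i=n_x$ for all $i=0,\dots,p-1$ (so $T_i$ is square and nonsingular). Then the subproblem multipliers of any KKT point of the expanded problem $E$ are uniquely determined and satisfy $$\lambda_{0,i}=\hat\lambda_{i-1},\quad i=0,\dots,p,$$ $$\lambda_{tc,i}=-\hat\lambda_i=-\lambda_{0,i+1},\quad i=0,\dots,p-1,$$ $$\lambda_{N_i,i}=-\lambda_{tc,i}=\lambda_{0,i+1},\quad i=0,\dots,p-1.$$
   Context: Problem $\mathrm{MPC}_N$ ($N\ge2$): variables $x_0,\dots,x_N\in\mathbb R^{n_x}$, $u_t\in\mathbb R^{n_{u,t}}$; minimize $\sum_{t=0}^{N-1}\big(\tfrac12[x_t;u_t]^TH_t[x_t;u_t]+f_t^T[x_t;u_t]+c_t\big)+\tfrac12x_N^TH_Nx_N+f_N^Tx_N+c_N$ s.t. $x_0=\bar x$, $x_{t+1}=A_tx_t+B_tu_t+a_t$. Standing assumptions: $H_t$ symmetric positive semidefinite with lower-right block $H_{u,t}$ positive definite, $H_N$ positive semidefinite, LICQ holds. Splitting: integer $1\le p<N$, $N_0,\dots,N_p\ge1$ with $\sum N_i=N$, $\tau_i=\sum_{j<i}N_j$; block data $A_{t,i}=A_{\tau_i+t}$, etc. (same for $B,a,H,f,c$), $t=0,\dots,N_i-1$, and $H_{N_p,p}=H_N$, $f_{N_p,p}=f_N$, $c_{N_p,p}=c_N$. Products $\prod_{t=t_0}^{t_1}A_t=A_{t_1}\cdots A_{t_0}$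 (empty $=I$). For $i<p$: $\mathcal A_i=\prod_{t=0}^{N_i-1}A_{t,i}$, $D_{j,i}=\prod_{s=j+1}^{N_i-1}A_{s,i}$, $D_i=[D_{0,i}\cdots D_{N_i-1,i}]$, $S_i=[D_{0,i}B_{0,i}\cdots D_{N_i-1,i}B_{N_i-1,i}]$, $\mathbf a_i=(a_{0,i};\dots;a_{N_i-1,i})$, $T_i$ a matrix whose columns form a basis of the range of $S_i$. Expanded problem $E$: variables $x_{t,i},u_{t,i}$ (all blocks $i=0,\dots,p$), $\bar x_0,\dots,\bar x_p$, $\bar d_0,\dots,\bar d_{p-1}$; objective $\sum_{i=0}^p\sum_{t=0}^{N_i-1}\big(\tfrac12[x_{t,i};u_{t,i}]^TH_{t,i}[x_{t,i};u_{t,i}]+f_{t,i}^T[x_{t,i};u_{t,i}]+c_{t,i}\big)+\tfrac12x_{N_p,p}^TH_{N_p,p}x_{N_p,p}+f_{N_p,p}^Tx_{N_p,p}+c_{N_p,p}$; constraints with multipliers: $x_{0,i}=\bar x_i$ ($\lambda_{0,i}$), $x_{t+1,i}=A_{t,i}x_{t,i}+B_{t,i}u_{t,i}+a_{t,i}$ ($\lambda_{t+1,i}$), for $i<p$: $x_{N_i,i}=\mathcal A_i\bar x_i+T_i\bar d_i+D_i\mathbf a_i$ ($\lambda_{tc,i}$); $\bar x_0=\bar x$ ($\hat\lambda_{-1}$); $\bar x_{i+1}=\mathcal A_i\bar x_i+T_i\bar d_i+D_i\mathbf a_i$, $i=0,\dots,p-1$ ($\hat\lambda_i$). Sign convention: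 for each constraint written $\ell=r$ (left side as displayed) with multiplier $\mu$, the Lagrangian is objective $+\sum\mu^T(r-\ell)$ and stationarity is vanishing of its gradient with respect to all variables. *)

From HB Require Import structures.
From mathcomp Require Import all_boot all_order all_algebra.
Set Implicit Arguments. Unset Strict Implicit. Unset Printing Implicit Defensive.
Import Order.TTheory GRing.Theory Num.Theory.
Local Open Scope ring_scope.

Section MPC.
Variable R : realFieldType.
Variable nx : nat.

(* Data of problem MPC_N, indexed by the global time t (only t < N is used
   for the stage data).  [Hm t] is H_t on [x_t; u_t], [fv t] is f_t. *)
Record mpc_data := MPCData {
  nu : nat -> nat;
  Am : nat -> 'M[R]_nx;
  Bm : forall t, 'M[R]_(nx, nu t);
  av : nat -> 'cV[R]_nx;
  Hm : forall t, 'M[R]_(nx + nu t);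
  fv : forall t, 'cV[R]_(nx + nu t);
  cs : nat -> R;
  HN : 'M[R]_nx; fN : 'cV[R]_nx; cN : R }.

Definition psd n (M : 'M[R]_n) := forall v : 'cV[R]_n, 0 <= (v^T *m M *m v) 0 0.
Definition pd n (M : 'M[R]_n) :=
  forall v : 'cV[R]_n, v != 0 -> 0 < (v^T *m M *m v) 0 0.

(* Standing assumptions (LICQ of MPC_N is automatic for pure dynamics
   equality constraints). *)
Definition standing (d : mpc_data) (N : nat) : Prop :=
  (forall t, (t < N)%N ->
     (Hm d t)^T = Hm d t /\ psd (Hm d t) /\ pd (drsubmx (Hm d t))) /\
  (HN d)^T = HN d /\ psd (HN d).

Definition tau (Nb : nat -> nat) (i : nat) : nat := (\sum_(j < i) Nb j)%N.

Fixpoint Aprod (A : nat -> 'M[R]_nx) (t0 n : nat) : 'M[R]_nx :=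
  match n with
  | 0 => 1%:M
  | n'.+1 => A (t0 + n')%N *m Aprod A t0 n'
  end.

Section Block.
Variables (d : mpc_data) (Nb : nat -> nat).

Definition calA (i : nat) : 'M[R]_nx := Aprod (Am d) (tau Nb i) (Nb i).
(* D_{j,i} = prod_{s=j+1}^{N_i-1} A_{s,i} *)
Definition Dji (i j : nat) : 'M[R]_nx :=
  Aprod (Am d) (tau Nb i + j.+1) (Nb i - j.+1).
Definition Smat (i : nat) :
    'M[R]_(nx, \sum_(j < Nb i) nu d (tau Nb i + j)) :=
  @mxrow _ (Nb i) (fun j : 'I_(Nb i) => nu d (tau Nb i + j)) nx
    (fun j : 'I_(Nb i) => Dji i j *m Bm d (tau Nb i + j)).
Definition Dmat (i : nat) : 'M[R]_(nx, \sum_(j < Nb i) nx) :=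
  @mxrow _ (Nb i) (fun _ : 'I_(Nb i) => nx) nx (fun j : 'I_(Nb i) => Dji i j).
Definition abold (i : nat) : 'M[R]_(\sum_(j < Nb i) nx, 1) :=
  @mxcol _ (Nb i) (fun _ : 'I_(Nb i) => nx) 1
    (fun j : 'I_(Nb i) => av d (tau Nb i + j)).

(* lambda-hat_{i-1}, with index -1 stored separately *)
Definition lhatm (lhm1 : 'cV[R]_nx) (lhat : nat -> 'cV[R]_nx) (i : nat) :=
  match i with 0 => lhm1 | j.+1 => lhat j end.

(* Primal: x i t = x_{t,i}, u i t = u_{t,i}, xb i = bar x_i, db i = bar d_i.
   Multipliers: lam i t = lambda_{t,i}, ltc i = lambda_{tc,i},
   lhm1 = hat lambda_{-1}, lhat i = hat lambda_i.
   Stationarity = vanishing gradient of the Lagrangian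
   objective + sum mu^T (rhs - lhs), written out explicitly
   (H_t symmetric, so grad of 1/2 z^T H z + f^T z is H z + f). *)
Definition KKT_E (p : nat) (r : nat -> nat) (T : forall i, 'M[R]_(nx, r i))
  (xbar : 'cV[R]_nx)
  (x : nat -> nat -> 'cV[R]_nx)
  (u : forall i t : nat, 'cV[R]_(nu d (tau Nb i + t)))
  (xb : nat -> 'cV[R]_nx) (db : forall i, 'cV[R]_(r i))
  (lam : nat -> nat -> 'cV[R]_nx) (ltc : nat -> 'cV[R]_nx)
  (lhm1 : 'cV[R]_nx) (lhat : nat -> 'cV[R]_nx) : Prop :=
  let g i t := Hm d (tau Nb i + t) *m col_mx (x i t) (u i t)
               + fv d (tau Nb i + t) in
  (forall i, (i <= p)%N -> x i 0%N = xb i) /\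
  (forall i t, (i <= p)%N -> (t < Nb i)%N ->
     x i t.+1 = Am d (tau Nb i + t) *m x i t + Bm d (tau Nb i + t) *m u i t
                + av d (tau Nb i + t)) /\
  (forall i, (i < p)%N ->
     x i (Nb i) = calA i *m xb i + T i *m db i + Dmat i *m abold i) /\
  xb 0%N = xbar /\
  (forall i, (i < p)%N ->
     xb i.+1 = calA i *m xb i + T i *m db i + Dmat i *m abold i) /\
  (* stationarity w.r.t. x_{t,i}, t < N_i *)
  (forall i t, (i <= p)%N -> (t < Nb i)%N ->
     usubmx (g i t) + (Am d (tau Nb i + t))^T *m lam i t.+1 - lam i t = 0) /\
  (* w.r.t. u_{t,i} *)
  (forall i t, (i <= p)%N -> (t < Nb i)%N ->
     dsubmx (g i t) + (Bm d (tau Nb i + t))^T *m lam i t.+1 = 0) /\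
  (* w.r.t. x_{N_i,i}, i < p *)
  (forall i, (i < p)%N -> - lam i (Nb i) - ltc i = 0) /\
  (* w.r.t. x_{N_p,p} *)
  HN d *m x p (Nb p) + fN d - lam p (Nb p) = 0 /\
  (* w.r.t. bar x_i *)
  (forall i, (i <= p)%N ->
     lam i 0%N - lhatm lhm1 lhat i
     + (if (i < p)%N then (calA i)^T *m ltc i + (calA i)^T *m lhat i else 0)
     = 0) /\
  (* w.r.t. bar d_i *)
  (forall i, (i < p)%N -> (T i)^T *m ltc i + (T i)^T *m lhat i = 0).

End Block.
End MPC.
Arguments KKT_E {R nx} d Nb p {r} T xbar x u xb db lam ltc lhm1 lhat.

From HB Require Import structures.
From mathcomp Require Import all_boot all_order all_algebra.
Set Implicit Arguments. Unset Strict Implicit. Unset Printing Implicit Defensive.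
Import Order.TTheory GRing.Theory Num.Theory.
Local Open Scope ring_scope.

(* Under subproblem LICQ, rank S_i = n_x, so the basis T_i of range S_i has
   full row rank and T_i^T is injective.  Stationarity with respect to the
   coupling variable bar d_i reads T_i^T (lambda_tc_i + hat lambda_i) = 0,
   hence lambda_tc_i = - hat lambda_i.  Substituting this into the
   stationarity conditions for bar x_i and x_{N_i,i} gives the two identities
   lambda_{0,i} = hat lambda_{i-1} and lambda_{N_i,i} = - lambda_tc_i, and
   chaining them links the blocks: lambda_{N_i,i} = lambda_{0,i+1}.

   Uniqueness is a backward recursion: the terminal condition fixes
   lambda_{N_p,p} from the primal point, the adjoint equation
   lambda_{t,i} = (H z + f)_x + A^T lambda_{t+1,i} propagates it down each
   block, and the link carries it to the top of the previous block. *)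

Lemma downward_ind (P : nat -> Prop) (n : nat) :
  P n -> (forall k, (k < n)%N -> P k.+1 -> P k) ->
  forall k, (k <= n)%N -> P k.
Proof.
move=> Pn step k kn; rewrite -(subKn kn).
elim: (n - k)%N (leq_subr k n) => [|j IH] jn; first by rewrite subn0.
apply: step; first by rewrite ltn_subrL (leq_ltn_trans (leq0n j) jn).
by rewrite subnSK //; apply: IH; exact: ltnW.
Qed.

Lemma tr_mul_inj_of_rank (F : fieldType) (n m k : nat)
    (S : 'M[F]_(n, m)) (T : 'M[F]_(n, k)) :
  (T^T == S^T)%MS -> \rank S = n ->
  forall w : 'cV[F]_n, T^T *m w = 0 -> w = 0.
Proof.
move=> /eqmxP eqTS rankS w Tw0.
have freeT : row_free T by rewrite /row_free -mxrank_tr eqTS mxrank_tr rankS.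
apply: trmx_inj; apply: (row_free_inj freeT).
by rewrite /= trmx0 mul0mx -[T]trmxK -trmx_mul Tw0 trmx0.
Qed.

Section ExpandedProblem.
Variables (R : realFieldType) (nx : nat) (d : mpc_data R nx).
Variables (p : nat) (Nb : nat -> nat) (r : nat -> nat).
Variables (T : forall i, 'M[R]_(nx, r i)) (xbar : 'cV[R]_nx).
Variables (x : nat -> nat -> 'cV[R]_nx)
          (u : forall i t : nat, 'cV[R]_(nu d (tau Nb i + t)))
          (xb : nat -> 'cV[R]_nx) (db : forall i, 'cV[R]_(r i)).

(* Subproblem LICQ, through its consequence that every T_i^T is injective
   (see tr_mul_inj_of_rank). *)
Hypothesis T_inj :
  forall i, (i < p)%N -> forall w : 'cV[R]_nx, (T i)^T *m w = 0 -> w = 0.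

Section KKTPoint.
Variables (lam : nat -> nat -> 'cV[R]_nx) (ltc : nat -> 'cV[R]_nx)
          (lhm1 : 'cV[R]_nx) (lhat : nat -> 'cV[R]_nx).
Hypothesis kkt : KKT_E d Nb p T xbar x u xb db lam ltc lhm1 lhat.

Lemma kkt_ltc i : (i < p)%N -> ltc i = - lhat i.
Proof.
case: kkt => _ [_ [_ [_ [_ [_ [_ [_ [_ [_ Hdb]]]]]]]]] ip.
apply: subr0_eq; rewrite opprK.
by apply: (T_inj ip); rewrite mulmxDr; exact: Hdb.
Qed.

Lemma kkt_lam_initial i : (i <= p)%N -> lam i 0%N = lhatm lhm1 lhat i.
Proof.
case: kkt => _ [_ [_ [_ [_ [_ [_ [_ [_ [Hxb _]]]]]]]]] ip.
apply: subr0_eq; move: (Hxb i ip); case: ifP => [ilt|_]; last by rewrite addr0.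
by rewrite -mulmxDr kkt_ltc // addNr mulmx0 addr0.
Qed.

Lemma kkt_lam_terminal i : (i < p)%N -> lam i (Nb i) = - ltc i.
Proof.
case: kkt => _ [_ [_ [_ [_ [_ [_ [HxN _]]]]]]] ip.
by rewrite -(addr0_eq (HxN i ip)) opprK.
Qed.

Lemma kkt_lam_link i : (i < p)%N -> lam i (Nb i) = lam i.+1 0%N.
Proof.
by move=> ip; rewrite kkt_lam_terminal // kkt_ltc // opprK kkt_lam_initial.
Qed.

Lemma kkt_lam_adjoint i t : (i <= p)%N -> (t < Nb i)%N ->
  lam i t = usubmx (Hm d (tau Nb i + t) *m col_mx (x i t) (u i t)
                    + fv d (tau Nb i + t))
            + (Am d (tau Nb i + t))^T *m lam i t.+1.
Proof.
case: kkt => _ [_ [_ [_ [_ [Hx _]]]]] ip tN.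
by rewrite (subr0_eq (Hx i t ip tN)).
Qed.

Lemma kkt_lam_final : lam p (Nb p) = HN d *m x p (Nb p) + fN d.
Proof.
case: kkt => _ [_ [_ [_ [_ [_ [_ [_ [HxNp _]]]]]]]].
by rewrite (subr0_eq HxNp).
Qed.

End KKTPoint.

Section TwoKKTPoints.
Variables (lam lam' : nat -> nat -> 'cV[R]_nx) (ltc ltc' : nat -> 'cV[R]_nx)
          (lhm1 lhm1' : 'cV[R]_nx) (lhat lhat' : nat -> 'cV[R]_nx).
Hypothesis kkt : KKT_E d Nb p T xbar x u xb db lam ltc lhm1 lhat.
Hypothesis kkt' : KKT_E d Nb p T xbar x u xb db lam' ltc' lhm1' lhat'.

Lemma kkt_block_unique i : (i <= p)%N -> lam' i (Nb i) = lam i (Nb i) ->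
  forall t, (t <= Nb i)%N -> lam' i t = lam i t.
Proof.
move=> ip top; apply: downward_ind => // t tN eq_next.
by rewrite (kkt_lam_adjoint kkt') // (kkt_lam_adjoint kkt) // eq_next.
Qed.

Lemma kkt_lam_unique i :
  (i <= p)%N -> forall t, (t <= Nb i)%N -> lam' i t = lam i t.
Proof.
move: i; apply: (@downward_ind (fun i =>
  forall t, (t <= Nb i)%N -> lam' i t = lam i t) p).
  apply: kkt_block_unique => //.
  by rewrite (kkt_lam_final kkt') (kkt_lam_final kkt).
move=> k kp eq_next; apply: kkt_block_unique; first exact: ltnW.
by rewrite (kkt_lam_link kkt') // (kkt_lam_link kkt) // eq_next.
Qed.

Lemma kkt_ltc_unique i : (i < p)%N -> ltc' i = ltc i.
Proof.
move=> ip; apply: oppr_inj.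
rewrite -(kkt_lam_terminal kkt') // -(kkt_lam_terminal kkt) //.
by rewrite kkt_lam_unique // ltnW.
Qed.

End TwoKKTPoints.
End ExpandedProblem.

Theorem corollary1 (R : realFieldType) (nx : nat) (d : mpc_data R nx)
  (N p : nat) (Nb : nat -> nat) (xbar : 'cV[R]_nx)
  (r : nat -> nat) (T : forall i, 'M[R]_(nx, r i)) :
  (2 <= N)%N -> standing d N ->
  (1 <= p)%N -> (p < N)%N -> (forall i, (i <= p)%N -> (1 <= Nb i)%N) ->
  (\sum_(i < p.+1) Nb i)%N = N ->
  (* columns of T_i form a basis of the range of S_i *)
  (forall i, (i < p)%N ->
     ((T i)^T == (Smat d Nb i)^T)%MS /\ row_free (T i)^T) ->
  (* LICQ for every subproblem *)
  (forall i, (i < p)%N -> \rank (Smat d Nb i) = nx) ->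
  forall (x : nat -> nat -> 'cV[R]_nx)
         (u : forall i t : nat, 'cV[R]_(nu d (tau Nb i + t)))
         (xb : nat -> 'cV[R]_nx) (db : forall i, 'cV[R]_(r i))
         (lam : nat -> nat -> 'cV[R]_nx) (ltc : nat -> 'cV[R]_nx)
         (lhm1 : 'cV[R]_nx) (lhat : nat -> 'cV[R]_nx),
  KKT_E d Nb p T xbar x u xb db lam ltc lhm1 lhat ->
  (forall i, (i <= p)%N -> lam i 0%N = lhatm lhm1 lhat i) /\
  (forall i, (i < p)%N -> ltc i = - lhat i /\ - lhat i = - lam i.+1 0%N) /\
  (forall i, (i < p)%N -> lam i (Nb i) = - ltc i /\ - ltc i = lam i.+1 0%N) /\
  (* uniqueness of the subproblem multipliers for this primal point *)
  (forall (lam' : nat -> nat -> 'cV[R]_nx) (ltc' : nat -> 'cV[R]_nx)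
          (lhm1' : 'cV[R]_nx) (lhat' : nat -> 'cV[R]_nx),
     KKT_E d Nb p T xbar x u xb db lam' ltc' lhm1' lhat' ->
     (forall i t, (i <= p)%N -> (t <= Nb i)%N -> lam' i t = lam i t) /\
     (forall i, (i < p)%N -> ltc' i = ltc i)).
Proof.
move=> _ _ _ _ _ _ basisT licq x u xb db lam ltc lhm1 lhat kkt.
have T_inj i : (i < p)%N -> forall w : 'cV[R]_nx, (T i)^T *m w = 0 -> w = 0.
  by move=> ip; exact: (tr_mul_inj_of_rank (basisT i ip).1 (licq i ip)).
split.
  by move=> i ip; exact: (kkt_lam_initial T_inj kkt ip).
split.
  move=> i ip; rewrite (kkt_ltc T_inj kkt) //.
  by rewrite (kkt_lam_initial T_inj kkt ip).
split.
  move=> i ip; rewrite (kkt_lam_terminal kkt) //.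
  by rewrite (kkt_ltc T_inj kkt) // opprK (kkt_lam_initial T_inj kkt ip).
move=> lam' ltc' lhm1' lhat' kkt'; split.
  by move=> i t ip; exact: (kkt_lam_unique T_inj kkt kkt' ip).
by move=> i ip; exact: (kkt_ltc_unique T_inj kkt kkt' ip).
Qed.
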